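(* Let $\mathbb{X}$ be a finite set, $\mathcal{H}_A$ a Hilbert space of finite dimension $d_A$, $\{\rho_A^x\}_{x\in\mathbb{X}}$ density operators on $\mathcal{H}_A$, $U_\theta$ a unitary on $\mathcal{H}_A$, $O=\{O_c\}_c$ a POVM on $\mathcal{H}_A$ with finitely many outcomes, and $p\in[0,1]$. Let $\mathcal{D}_{p,d_A}(\rho)=\frac{p}{d_A}I+(1-p)\rho$ and \[ \Gamma(\mathcal{D}_{p,d_A})=\max_{x\in\mathbb{X}}\sum_c\big|\operatorname{tr}(O_cU_\theta\rho_A^xU_\theta^\dagger)-\operatorname{tr}(O_c\mathcal{D}_{p,d_A}(U_\theta\rho_A^xU_\theta^\dagger))\big|. \] Then, writing $\mathcal{D}_{p,d_A}(\rho_A)$ for the family $\{\mathcal{D}_{p,d_A}(\rho_A^x)\}_{x\in\mathbb{X}}$, \[ \mathcal{B}(X\rightarrow A)_{\mathcal{D}_{p,d_A}(\rho_A)}\leq\mathcal{R}(X\rightarrow A)_{\mathcal{D}_{p,d_A}(\rho_A)}\leq\log\Big((1-2d_A)+\frac{4d_A}{\Gamma(\mathcal{D}_{p,d_A})}\Big), \] with the right-hand side interpreted as $+\infty$ when $\Gamma(\mathcal{D}_{p,d_A})=0$.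
   Context: All logarithms are base 2. For a density operator $\rho$ and positive semi-definite $\sigma$, $\widetilde{D}_\infty(\rho\|\sigma)=\log\inf\{\mu\in\mathbb{R}:\rho\leq\mu\sigma\}$ ($+\infty$ if $\operatorname{supp}\rho\not\subseteq\operatorname{supp}\sigma$). For a family $\{\tau^x\}_{x\in\mathbb{X}}$ of density operators, $\mathcal{B}=\min_{\pi\in\Delta(\mathbb{X})}\max_x\widetilde{D}_\infty(\tau^x\|\sum_{x'}\pi(x')\tau^{x'})$ (with $\Delta(\mathbb{X})$ the probability mass functions on $\mathbb{X}$) and $\mathcal{R}=\max_{x,x'}\widetilde{D}_\infty(\tau^x\|\tau^{x'})$. *)

From HB Require Import structures.
From mathcomp Require Import all_boot all_order all_algebra.
From mathcomp Require Import boolp classical_sets reals constructive_ereal ereal exp.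
From mathcomp.real_closed Require Import complex.
Set Implicit Arguments. Unset Strict Implicit. Unset Printing Implicit Defensive.
Import Order.TTheory GRing.Theory Num.Theory.
Local Open Scope ring_scope.

Section QDefs.
Variable R : realType.
Local Notation C := R[i].

Definition log2 (x : R) : R := ln x / ln 2.

Definition adjmx m n (A : 'M[C]_(m, n)) : 'M[C]_(n, m) := (map_mx (@conjc R) A)^T.

(** positive semi-definite: v^dagger A v >= 0 (real and nonnegative) for all v *)
Definition psd n (A : 'M[C]_n) : Prop :=
  forall v : 'cV[C]_n, 0 <= (adjmx v *m A *m v) 0 0.

Definition loewner_le n (A B : 'M[C]_n) : Prop := psd (B - A).

Definition density n (rho : 'M[C]_n) : Prop := psd rho /\ \tr rho = 1.

Definition unitary n (U : 'M[C]_n) : Prop := U *m adjmx U = 1%:M.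

Definition povm n (K : finType) (O : K -> 'M[C]_n) : Prop :=
  (forall c, psd (O c)) /\ \sum_c O c = 1%:M.

(** supp rho subset of supp sigma  <=>  ker sigma subset of ker rho (sigma psd) *)
Definition supp_sub n (rho sigma : 'M[C]_n) : Prop :=
  forall v : 'cV[C]_n, sigma *m v = 0 -> rho *m v = 0.

Definition Dmax n (rho sigma : 'M[C]_n) : \bar R :=
  if `[< supp_sub rho sigma >] then
    (log2 (inf [set mu : R | loewner_le rho ((mu%:C)%C *: sigma)]))%:E
  else +oo%E.

Definition pmf (X : finType) (pi : X -> R) : Prop :=
  (forall x, 0 <= pi x) /\ \sum_x pi x = 1.

Definition Bquant (X : finType) n (tau : X -> 'M[C]_n) : \bar R :=
  ereal_inf [set (\big[maxe/-oo%E]_x Dmax (tau x) (\sum_x' ((pi x')%:C)%C *: tau x'))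
            | pi in [set pi : X -> R | pmf pi]].

Definition Rquant (X : finType) n (tau : X -> 'M[C]_n) : \bar R :=
  \big[maxe/-oo%E]_x \big[maxe/-oo%E]_x' Dmax (tau x) (tau x').

Definition depol n (p : R) (rho : 'M[C]_n) : 'M[C]_n :=
  ((p / n%:R)%:C)%C%:M + ((1 - p)%:C)%C *: rho.

Definition Gamma (X : finType) (K : finType) n (p : R) (rho : X -> 'M[C]_n)
    (U : 'M[C]_n) (O : K -> 'M[C]_n) : R :=
  \big[Order.max/0]_x \sum_c
     Normc.normc (\tr (O c *m (U *m rho x *m adjmx U))
                  - \tr (O c *m depol p (U *m rho x *m adjmx U))).

End QDefs.

From HB Require Import structures.
From mathcomp Require Import all_boot all_order all_algebra.
From mathcomp Require Import boolp classical_sets reals constructive_ereal ereal exp.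
From mathcomp.real_closed Require Import complex.
From mathcomp Require Import ring lra.
Import Order.TTheory GRing.Theory Num.Theory.
Set Implicit Arguments. Unset Strict Implicit. Unset Printing Implicit Defensive.
Local Open Scope ring_scope.

(** Since a density operator satisfies [r <= I],
    every output obeys [(p/d) I <= D(r) <= (p/d + 1 - p) I], so [D(r) <= (1 - d + d/p) D(r')] for all
    inputs [r, r']: every pairwise max-relative entropy, hence [R], is at most
    [log (1 - d + d/p)], and [B <= R] by taking a point mass for [pi].  On the
    other side, each difference of outcome probabilities in [Gamma] equals
    [p tr(O_c s) - (p/d) tr O_c], whence [Gamma <= 2p], i.e. [d/p <= 2d/Gamma],
    and [1 - d + d/p <= 1 - 2d + 4d/Gamma]. *)

Section PsdMatrices.
Variable R : realType.
Local Notation C := R[i].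
Implicit Types (n : nat) (c : C).

Lemma adjmxD m n (A B : 'M[C]_(m, n)) : adjmx (A + B) = adjmx A + adjmx B.
Proof. by apply/matrixP => i j; rewrite !mxE rmorphD. Qed.

Lemma adjmxZ m n c (A : 'M[C]_(m, n)) : adjmx (c *: A) = c^* *: adjmx A.
Proof. by apply/matrixP => i j; rewrite !mxE rmorphM. Qed.

Lemma adjmxM m n k (A : 'M[C]_(m, n)) (B : 'M[C]_(n, k)) :
  adjmx (A *m B) = adjmx B *m adjmx A.
Proof. by rewrite /adjmx map_mxM trmx_mul. Qed.

Lemma adjmxK m n (A : 'M[C]_(m, n)) : adjmx (adjmx A) = A.
Proof. by apply/matrixP => i j; rewrite !mxE conjcK. Qed.

Lemma adjmx_delta m n (i : 'I_m) (j : 'I_n) :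
  adjmx (delta_mx i j : 'M[C]_(m, n)) = delta_mx j i.
Proof. by apply/matrixP => a b; rewrite !mxE andbC conjc_nat. Qed.

Lemma adjmx_trmxC n (A : 'M[C]_n) : adjmx A = (A ^t* )%sesqui.
Proof. by rewrite /adjmx map_trmx. Qed.

Definition sform n (A : 'M[C]_n) (u w : 'cV[C]_n) : C := (adjmx u *m A *m w) 0 0.

Local Notation qform A v := (sform A v v).

Lemma sform_delta n (A : 'M[C]_n) i j :
  sform A (delta_mx i 0) (delta_mx j 0) = A i j.
Proof. by rewrite /sform adjmx_delta -rowE -colE !mxE. Qed.

Lemma sformD n (A B : 'M[C]_n) u w : sform (A + B) u w = sform A u w + sform B u w.
Proof. by rewrite /sform mulmxDr mulmxDl mxE. Qed.

Lemma sformB n (A B : 'M[C]_n) u w : sform (A - B) u w = sform A u w - sform B u w.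
Proof. by rewrite /sform mulmxBr mulmxBl !mxE. Qed.

Lemma sformZ n c (A : 'M[C]_n) u w : sform (c *: A) u w = c * sform A u w.
Proof. by rewrite /sform -scalemxAr -scalemxAl mxE. Qed.

Lemma sform_scalar n c u w : sform (c%:M : 'M[C]_n) u w = c * sform 1%:M u w.
Proof. by rewrite -[c%:M]scalemx1 sformZ. Qed.

Lemma sform_conjmx n (A M : 'M[C]_n) u w :
  sform (adjmx M *m A *m M) u w = sform A (M *m u) (M *m w).
Proof. by rewrite /sform adjmxM !mulmxA. Qed.

Lemma sform_cross n (A : 'M[C]_n) u w c :
  c * sform A u w + c^* * sform A w u =
  qform A (u + c *: w) - qform A u - c^* * c * qform A w.
Proof.
rewrite /sform adjmxD adjmxZ !mulmxDl !mulmxDr -!scalemxAl -!scalemxAr !mxE.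
ring.
Qed.

Lemma qform1 n (v : 'cV[C]_n) : qform 1%:M v = \sum_i (v i 0)^* * v i 0.
Proof. by rewrite /sform mulmx1 mxE; apply: eq_bigr => i _; rewrite !mxE. Qed.

Lemma qform_diag n (l : 'rV[C]_n) v :
  qform (diag_mx l) v = \sum_i l 0 i * ((v i 0)^* * v i 0).
Proof.
rewrite /sform mxE; apply: eq_bigr => i _.
by rewrite mul_mx_diag !mxE mulrCA mulrA.
Qed.

Lemma qform1_ge0 n (v : 'cV[C]_n) : 0 <= qform 1%:M v.
Proof. by rewrite qform1 sumr_ge0 // => i _; rewrite mulrC mul_conjC_ge0. Qed.

Lemma qform1_eq0 n (v : 'cV[C]_n) : qform 1%:M v = 0 -> v = 0.
Proof.
rewrite qform1 => /psumr_eq0P v0; apply/matrixP => i j; rewrite ord1 mxE.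
apply/eqP; rewrite -(mul_conjC_eq0 (v i 0)) mulrC; apply/eqP.
by apply: v0 => // k _; rewrite mulrC mul_conjC_ge0.
Qed.

Lemma psd_conjmx n (A M : 'M[C]_n) : psd A -> psd (M *m A *m adjmx M).
Proof.
move=> psdA v; change (0 <= qform (M *m A *m adjmx M) v).
rewrite -[M in M *m A]adjmxK sform_conjmx; exact: psdA.
Qed.

Lemma real_polar_conjC c c' : c + c' \is Num.real -> 'i * (c - c') \is Num.real ->
  c = c'^*.
Proof.
move: c c' => [a b] [a' b']; rewrite /= !complex_real.
by rewrite mul0r mul1r add0r subr_eq0 addr_eq0 => /eqP -> /eqP ->.
Qed.

Lemma psd_adjmx n (A : 'M[C]_n) : psd A -> adjmx A = A.
Proof.
move=> psdA; apply/matrixP => i j; rewrite !mxE; apply/esym.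
have qreal v : qform A v \is Num.real by exact/ger0_real/psdA.
have cross c : c * A i j + c^* * A j i \is Num.real.
  rewrite -!sform_delta sform_cross [c^* * c]mulrC.
  by rewrite !rpredB ?qreal // rpredM ?qreal // ger0_real // mul_conjC_ge0.
apply: (@real_polar_conjC (A i j) (A j i)); first by have := cross 1; rewrite conjC1 !mul1r.
by have := cross 'i; rewrite conjCi mulNr mulrBr.
Qed.

Lemma unitary_adjmx_mulmx n (P : 'M[C]_n) : unitary P -> adjmx P *m P = 1%:M.
Proof. exact: mulmx1C. Qed.

Lemma psd_spectral n (A : 'M[C]_n) : psd A ->
  exists P (l : 'rV[C]_n),
    [/\ unitary P, A = adjmx P *m diag_mx l *m P & forall i, 0 <= l 0 i].
Proof.
move=> psdA; have /orthomx_spectralP A_eq : A \is normalmx.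
  by apply/normalmxP; rewrite -adjmx_trmxC psd_adjmx.
have /unitarymxP uP := spectral_unitarymx A.
rewrite invmx_unitary ?spectral_unitarymx // -adjmx_trmxC in A_eq.
rewrite -adjmx_trmxC in uP.
move: (spectralmx A) (spectral_diag A) A_eq uP => P l A_eq uP.
exists P, l; split => // i.
have := psdA (adjmx P *m delta_mx i 0).
rewrite -[X in 0 <= X -> _]/(qform _ _) -sform_conjmx adjmxK A_eq !mulmxA uP.
by rewrite mul1mx -mulmxA uP mulmx1 sform_delta mxE eqxx mulr1n.
Qed.

Lemma psd_diag_ge0 n (A : 'M[C]_n) i : psd A -> 0 <= A i i.
Proof. by rewrite -sform_delta; apply. Qed.

Lemma psd_trace_ge0 n (A : 'M[C]_n) : psd A -> 0 <= \tr A.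
Proof. by move=> psdA; apply: sumr_ge0 => i _; apply: psd_diag_ge0. Qed.

Lemma psd_trace_mulmx_ge0 n (A B : 'M[C]_n) : psd A -> psd B -> 0 <= \tr (A *m B).
Proof.
move=> psdA /psd_spectral [P [l [_ -> l_ge0]]].
rewrite !mulmxA mxtrace_mulC !mulmxA; apply: sumr_ge0 => i _.
by rewrite mul_mx_diag mxE mulr_ge0 // psd_diag_ge0 //; apply: psd_conjmx.
Qed.

Lemma qform1_unitary n (P : 'M[C]_n) v :
  unitary P -> qform 1%:M (P *m v) = qform 1%:M v.
Proof. by move=> uP; rewrite -sform_conjmx mulmx1 unitary_adjmx_mulmx. Qed.

Lemma psd_le_trace n (A : 'M[C]_n) : psd A -> loewner_le A (\tr A)%:M.
Proof.
move=> /psd_spectral [P [l [uP -> l_ge0]]] v.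
rewrite -[X in 0 <= X]/(qform _ v) sformB sform_scalar -(qform1_unitary v uP).
rewrite sform_conjmx qform_diag qform1 mxtrace_mulC mulmxA uP mul1mx mxtrace_diag.
rewrite mulr_suml -sumrB sumr_ge0 // => i _; rewrite -mulrBr mulr_ge0 //.
by rewrite subr_ge0 (bigD1 i) //= lerDl sumr_ge0 // => k _; rewrite mulrC mul_conjC_ge0.
Qed.

Lemma trace_conj_unitary n (A U : 'M[C]_n) :
  unitary U -> \tr (U *m A *m adjmx U) = \tr A.
Proof. by move=> uU; rewrite mxtrace_mulC mulmxA unitary_adjmx_mulmx // mul1mx. Qed.

End PsdMatrices.

Notation qform A v := (sform A v v).

Section Entropies.
Variable R : realType.
Local Notation C := R[i].

Lemma ler_log2 (x y : R) : 0 < x -> x <= y -> log2 x <= log2 y.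
Proof.
move=> x_gt0 le_xy; have y_gt0 := lt_le_trans x_gt0 le_xy.
by rewrite /log2 ler_pM2r ?invr_gt0 ?ln_gt0 ?ltr1n // ler_ln ?posrE.
Qed.

Lemma Dmax_le_log2 n (rho sigma : 'M[C]_n) (mu : R) :
  \tr rho = 1 -> \tr sigma = 1 -> supp_sub rho sigma ->
  loewner_le rho ((mu%:C)%C *: sigma) -> (Dmax rho sigma <= (log2 mu)%:E)%E.
Proof.
move=> tr_rho tr_sigma supp rho_le; rewrite /Dmax asboolT // lee_fin.
set S := (X in inf X).
(* [1 <= inf S] keeps [ln] away from its junk value [0] on nonpositive arguments. *)
have S_ge1 m : S m -> 1 <= m.
  move/psd_trace_ge0; rewrite raddfB /= mxtraceZ tr_rho tr_sigma mulr1.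
  by rewrite -[1]/(1%:C)%C -rmorphB ler0c subr_ge0.
have inf_ge1 : 1 <= inf S by apply: lb_le_inf; [exists mu | move=> m /S_ge1].
apply: ler_log2; first exact: lt_le_trans inf_ge1.
by apply: ge_inf => //; exists 1 => m /S_ge1.
Qed.

Lemma Bquant_le_Rquant (X : finType) n (tau : X -> 'M[C]_n) (x0 : X) :
  (Bquant tau <= Rquant tau)%E.
Proof.
pose dirac x : R := (x == x0)%:R.
have dirac_pmf : pmf dirac.
  split=> [x|]; first exact: ler0n.
  by rewrite (bigD1 x0) //= /dirac eqxx big1 ?addr0 // => x /negbTE ->.
have mix_dirac : \sum_x ((dirac x)%:C)%C *: tau x = tau x0.
  rewrite (bigD1 x0) //= /dirac eqxx scale1r big1 ?addr0 // => x /negbTE ->.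
  by rewrite scale0r.
apply: (@le_trans _ _ (\big[maxe/-oo%E]_x Dmax (tau x) (tau x0))).
  by rewrite -mix_dirac; apply: ereal_inf_lbound; exists dirac.
by apply: le_bigmax2 => x _; exact: (le_bigmax _ (fun x' => Dmax (tau x) (tau x'))).
Qed.

Lemma Rquant_le (X : finType) n (tau : X -> 'M[C]_n) (b : \bar R) :
  (forall x x', (Dmax (tau x) (tau x') <= b)%E) -> (Rquant tau <= b)%E.
Proof.
move=> Dmax_le; apply: bigmax_le => [|x _]; first exact: leNye.
by apply: bigmax_le => [|x' _]; [exact: leNye | exact: Dmax_le].
Qed.

End Entropies.

Lemma depol_factor_ge1 (R : realType) (d p : R) :
  0 <= d -> 0 < p -> p <= 1 -> 1 <= 1 - d + d / p.
Proof.
move=> d_ge0 p_gt0 p_le1; have : d <= d / p by rewrite ler_pdivlMr // ler_piMr.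
lra.
Qed.

Lemma normc_complex (R : realType) (z : R[i]) : ((Normc.normc z)%:C)%C = `|z|.
Proof. by case: z => a b; rewrite normc_def. Qed.

Section Depolarizing.
Variables (R : realType) (n : nat) (p : R).
Hypothesis n_gt0 : (0 < n)%N.
Local Notation C := R[i].
Implicit Types (r s O : 'M[C]_n) (v : 'cV[C]_n).

Let n_neq0 : n%:R != 0 :> R. Proof. by rewrite pnatr_eq0 -lt0n. Qed.

Lemma mxtrace_depol r : \tr r = 1 -> \tr (depol p r) = 1.
Proof.
move=> tr_r; rewrite /depol mxtraceD mxtraceZ mxtrace_scalar tr_r mulr1.
by rewrite -rmorphMn -rmorphD -mulr_natr divfK // addrC subrK.
Qed.

Lemma qform_depol r v :
  qform (depol p r) v = ((p / n%:R)%:C)%C * qform 1%:M v + ((1 - p)%:C)%C * qform r v.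
Proof. by rewrite sformD sform_scalar sformZ. Qed.

Lemma depol_mulmx_eq0 r v : 0 < p -> p <= 1 -> psd r -> depol p r *m v = 0 -> v = 0.
Proof.
move=> p_gt0 p_le1 psd_r rv0.
have : qform (depol p r) v = 0 by rewrite /sform -mulmxA rv0 mulmx0 mxE.
rewrite qform_depol => /eqP; rewrite paddr_eq0; first last.
- by rewrite mulr_ge0 ?ler0c ?subr_ge0 //; apply: psd_r.
- by rewrite mulr_ge0 ?qform1_ge0 // ler0c divr_ge0 ?ler0n ?ltW.
case/andP => /eqP/eqP; rewrite mulf_eq0 => /orP[|/eqP/qform1_eq0 //].
by rewrite -[0]/(0%:C)%C (inj_eq (@complexI R)) mulf_eq0 invr_eq0 (negbTE n_neq0) gt_eqF.
Qed.

Lemma depol_supp_sub r r' :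
  0 < p -> p <= 1 -> psd r' -> supp_sub (depol p r) (depol p r').
Proof. by move=> p_gt0 p_le1 psd_r' v /depol_mulmx_eq0 ->; rewrite ?mulmx0. Qed.

(* [r <= \tr r I = I] gives [depol p r <= (p/n + 1 - p) I], while [(p/n) I <= depol p r'];
   the ratio of these two constants is [1 - n + n/p]. *)
Lemma depol_loewner_le r r' : 0 < p -> p <= 1 -> density r -> psd r' ->
  loewner_le (depol p r) (((1 - n%:R + n%:R / p)%:C)%C *: depol p r').
Proof.
move=> p_gt0 p_le1 [psd_r tr_r] psd_r' v.
set mu := 1 - n%:R + n%:R / p.
have mu_pn : mu * (p / n%:R) = p / n%:R + (1 - p).
  by rewrite /mu; field; rewrite n_neq0 gt_eqF.
have r_le1 := psd_le_trace psd_r v; rewrite tr_r in r_le1.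
rewrite -[(_ *m _ *m v) 0 0]/(qform _ v) sformB sformZ !qform_depol.
rewrite mulrDr mulrA -rmorphM mu_pn.
rewrite rmorphD [X in 0 <= X](_ : _ = ((1 - p)%:C)%C * qform (1%:M - r) v +
    (mu%:C)%C * (((1 - p)%:C)%C * qform r' v)); last by rewrite sformB; ring.
rewrite addr_ge0 ?mulr_ge0 ?ler0c ?subr_ge0 //; last exact: psd_r'.
by rewrite (le_trans _ (depol_factor_ge1 _ p_gt0 p_le1)) ?ler0n.
Qed.

Lemma Dmax_depol_le r r' : 0 < p -> p <= 1 -> density r -> density r' ->
  (Dmax (depol p r) (depol p r') <= (log2 (1 - n%:R + n%:R / p))%:E)%E.
Proof.
move=> p_gt0 p_le1 r_density [psd_r' tr_r'].
apply: Dmax_le_log2; rewrite ?mxtrace_depol //; first by case: r_density.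
  exact: depol_supp_sub.
exact: depol_loewner_le.
Qed.

Lemma mxtrace_sub_depol O s : \tr (O *m s) - \tr (O *m depol p s) =
  (p%:C)%C * \tr (O *m s) - ((p / n%:R)%:C)%C * \tr O.
Proof.
rewrite /depol mulmxDr mul_mx_scalar -scalemxAr mxtraceD !mxtraceZ rmorphB rmorph1.
ring.
Qed.

Lemma sum_normc_depol_le (K : finType) (O : K -> 'M[C]_n) s :
  0 <= p -> povm O -> density s ->
  \sum_c Normc.normc (\tr (O c *m s) - \tr (O c *m depol p s)) <= 2 * p.
Proof.
move=> p_ge0 [psd_O sum_O] [psd_s tr_s]; rewrite -lecR raddf_sum /=.
under eq_bigr => c _ do rewrite normc_complex mxtrace_sub_depol.
apply: (@le_trans _ _
  (\sum_c ((p%:C)%C * \tr (O c *m s) + ((p / n%:R)%:C)%C * \tr (O c)))).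
  apply: ler_sum => c _; apply: le_trans (ler_normB _ _) _.
  have := psd_trace_mulmx_ge0 (psd_O c) psd_s; have := psd_trace_ge0 (psd_O c).
  by move=> ? ?; rewrite !normrM !ger0_norm ?ler0c ?divr_ge0 ?ler0n.
have sum_tr_Os : \sum_c \tr (O c *m s) = 1.
  by rewrite -raddf_sum -mulmx_suml sum_O mul1mx; exact: tr_s.
have sum_tr_O : \sum_c \tr (O c) = n%:R by rewrite -raddf_sum sum_O; exact: mxtrace1.
rewrite big_split /= -!mulr_sumr sum_tr_Os sum_tr_O mulr1.
by rewrite -(rmorph_nat (real_complex R)) -!rmorphM -rmorphD lecR divfK // -mulr2n mulr_natl.
Qed.

Lemma Gamma_le (X K : finType) (rho : X -> 'M[C]_n) U (O : K -> 'M[C]_n) :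
  0 <= p -> (forall x, density (rho x)) -> unitary U -> povm O ->
  Gamma p rho U O <= 2 * p.
Proof.
move=> p_ge0 rho_density uU O_povm; apply: bigmax_le => [|x _]; first exact: mulr_ge0.
have [psd_rho tr_rho] := rho_density x.
apply: sum_normc_depol_le => //; split; first exact: psd_conjmx.
by rewrite trace_conj_unitary.
Qed.

End Depolarizing.

Lemma depol_factor_le (R : realType) (d p G : R) :
  0 <= d -> 0 < G -> G <= 2 * p -> p <= 1 -> 1 - d + d / p <= 1 - 2 * d + 4 * d / G.
Proof.
move=> d_ge0 G_gt0 G_le p_le1; have p_gt0 : 0 < p by lra.
have d_le : d <= d / p by rewrite ler_pdivlMr // ler_piMr.
have dG_le : d / p * G <= 2 * d.
  have -> : 2 * d = d / p * (2 * p) by field; rewrite gt_eqF.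
  by apply: ler_wpM2l G_le; rewrite divr_ge0 // ltW.
have : 2 * (d / p) <= 4 * d / G by rewrite ler_pdivlMr // -mulrA; lra.
lra.
Qed.

Theorem corollary3 (R : realType) (X : finType) (K : finType) (d : nat)
    (x0 : X) (rho : X -> 'M[R[i]]_d) (U : 'M[R[i]]_d) (O : K -> 'M[R[i]]_d) (p : R) :
  (0 < d)%N ->
  (forall x, density (rho x)) ->
  unitary U ->
  povm O ->
  0 <= p <= 1 ->
  let tau := fun x => depol p (rho x) in
  let G := Gamma p rho U O in
  (Bquant tau <= Rquant tau)%E /\
  (Rquant tau <= (if (G == 0)%R then +oo
                  else (log2 ((1 - 2 * d%:R) + 4 * d%:R / G)%R)%:E))%E.
Proof.
move=> d_gt0 rho_density uU O_povm /andP[p_ge0 p_le1] tau G; split.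
  exact: Bquant_le_Rquant.
case: ifPn => [_|G_neq0]; first exact: leey.
have G_le : G <= 2 * p by apply: Gamma_le.
have G_gt0 : 0 < G by rewrite lt_neqAle eq_sym G_neq0 bigmax_ge_id.
have p_gt0 : 0 < p by lra.
apply: Rquant_le => x x'.
apply: le_trans (Dmax_depol_le d_gt0 p_gt0 p_le1 (rho_density x) (rho_density x')) _.
rewrite lee_fin ler_log2 ?depol_factor_le ?ler0n //.
exact: lt_le_trans ltr01 (depol_factor_ge1 (ler0n _ _) p_gt0 p_le1).
Qed.
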